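(* Let $X$ and $Y$ be Banach spaces, $S\in\mathcal{L}(X,Y)$, $F\subset X$ bounded and convex, and $n\in\mathbb{N}_0$. Then $e_n^{\text{det-non-mb}}(S,F)\le 8\,e_n^{\text{det-non}}(S,F)$.
   Context: A deterministic non-adaptive algorithm with $n$ measurements is a map $A_n=\phi\circ(L_1,\dots,L_n)\colon F\to Y$ with fixed $L_1,\dots,L_n\in X'$ and arbitrary $\phi\colon\mathbb{R}^n\to Y$; its error is $\sup_{f\in F}\|S(f)-A_n(f)\|$. $e_n^{\text{det-non}}(S,F)$ is the infimum of the error over all such algorithms, and $e_n^{\text{det-non-mb}}(S,F)$ is the infimum over those such algorithms that are $(\mathcal{B}_F,\mathcal{B}_Y)$-measurable, where $\mathcal{B}_Y$ is the Borel $\sigma$-algebra of $Y$ and $\mathcal{B}_F$ the Borel $\sigma$-algebra on $F$ of the seminorm whose unit ball is $F-F$. *)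

From HB Require Import structures.
From mathcomp Require Import all_boot all_order all_algebra.
From mathcomp Require Import all_classical all_reals all_analysis.
Set Implicit Arguments. Unset Strict Implicit. Unset Printing Implicit Defensive.
Import Order.TTheory GRing.Theory Num.Theory.
Import numFieldNormedType.Exports.
Local Open Scope classical_set_scope.
Local Open Scope ring_scope.

Section Defs.
Variables (R : realType) (X Y : normedModType R).

Definition convex (F : set X) : Prop :=
  forall x y (t : R), F x -> F y -> 0 <= t -> t <= 1 -> F (t *: x + (1 - t) *: y).

Definition dual_elt (L : X -> R) : Prop :=
  (forall (a : R) (x y : X), L (a *: x + y) = a * L x + L y) /\ continuous L.

Definition det_non_alg (n : nat) (A : X -> Y) : Prop :=
  exists (L : 'I_n -> X -> R) (phi : ('I_n -> R) -> Y),
    (forall i, dual_elt (L i)) /\ forall f, A f = phi (fun i => L i f).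

Definition err (S : X -> Y) (F : set X) (A : X -> Y) : \bar R :=
  ereal_sup [set (`|S f - A f|)%:E | f in F].

(* Minkowski functional (seminorm) of F - F *)
Definition diffset (F : set X) : set X := [set f - g | f in F & g in F].
Definition mink (F : set X) (x : X) : \bar R :=
  ereal_inf [set t%:E | t in [set t : R | 0 < t /\ exists2 z, diffset F z & x = t *: z]].

(* open subsets of F for the (pseudo)metric d(f,g) = mink F (f - g) *)
Definition F_open (F : set X) (U : set X) : Prop :=
  U `<=` F /\ forall u, U u -> exists2 r : R, 0 < r &
     forall f, F f -> (mink F (f - u)%R < r%:E)%E -> U f.

Definition borel_F (F : set X) : set (set X) := <<s F, F_open F >>.

Definition borel_Y : set (set Y) := <<s [set U : set Y | open U] >>.

Definition F_measurable (F : set X) (A : X -> Y) : Prop :=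
  forall B, borel_Y B -> borel_F F (F `&` A @^-1` B).

Definition e_det_non (n : nat) (S : X -> Y) (F : set X) : \bar R :=
  ereal_inf [set err S F A | A in det_non_alg n].

Definition e_det_non_mb (n : nat) (S : X -> Y) (F : set X) : \bar R :=
  ereal_inf [set err S F A | A in [set A | det_non_alg n A /\ F_measurable F A]].

End Defs.

(* Let A = phi o N be an algorithm with error e, where N = (L_1, ..., L_n).
   Put a grid of mesh d on the values of N and replace the input f by a fixed
   representative g of its grid cell.  The set N(F - F) is absolutely convex in
   R^n, so for d small N(g) - N(f) = s (N a - N b) with a, b in F and s small.
   Moving f towards a and g towards b by the factor s / (1 + s) gives points
   f', g' of F (convexity) with N f' = N g', hence A f' = A g', and the triangle
   inequality gives |S f - A g| <= 3 e + O(s).  Grid cells are finite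
   intersections of slabs, whose half-spaces are open for the seminorm of
   F - F because each L_i is bounded on F - F; so the new algorithm, which only
   depends on the cell of f, is measurable.  This proves the bound with the
   constant 3. *)

From HB Require Import structures.
From mathcomp Require Import all_boot all_order all_algebra.
From mathcomp Require Import all_classical all_reals all_analysis.
From mathcomp Require Import ring lra.
Import Order.TTheory GRing.Theory Num.Theory.
Import numFieldNormedType.Exports.
Local Open Scope classical_set_scope.
Local Open Scope ring_scope.

Set Implicit Arguments.
Unset Strict Implicit.
Unset Printing Implicit Defensive.

Section relative_sigma_algebra.
Context {T : Type} (D : set T) (G : set (set T)).

Lemma sigma_algebra_bigcup_countable (J : countType) (A : J -> set T) :
  (forall i, <<s D, G >> (A i)) -> <<s D, G >> (\bigcup_i A i).
Proof.
move=> GA; have -> : \bigcup_i A i = \bigcup_k oapp A set0 (unpickle k).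
  apply/seteqP; split=> [x [i _ Aix]|x [k _]].
    by exists (pickle i); rewrite //= pickleK.
  by case: unpickle => //= i Aix; exists i.
apply: sigma_algebra_bigcup => k.
by case: unpickle => [i|]; [exact: GA | exact: sigma_algebra0].
Qed.

Lemma sigma_algebra_setU (A B : set T) :
  <<s D, G >> A -> <<s D, G >> B -> <<s D, G >> (A `|` B).
Proof.
move=> GA GB; rewrite -bigcup2E; apply: sigma_algebra_bigcup => -[|[|k]] //=.
exact: sigma_algebra0.
Qed.

Lemma sigma_algebra_setI_bigcap (J : countType) (A : J -> set T) :
  (forall i, <<s D, G >> (A i)) -> <<s D, G >> (D `&` \bigcap_i A i).
Proof.
move=> GA; have -> : D `&` \bigcap_i A i = D `\` \bigcup_i (D `\` A i).
  apply/seteqP; split=> [x [Dx Ax]|x [Dx nDA]].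
    by split=> // -[i _ []]; have := Ax i I.
  split=> // j _; apply: contrapT => nAj; by apply: nDA; exists j.
apply: sigma_algebraCD; apply: sigma_algebra_bigcup_countable => i.
exact: sigma_algebraCD.
Qed.

End relative_sigma_algebra.

Section convex_sets.
Variables (R : realType) (V : normedModType R).
Implicit Types F Q : set V.

Lemma convex_diffset F : convex F -> convex (diffset F).
Proof.
move=> Fc _ _ t [a Fa [b Fb <-]] [a' Fa' [b' Fb' <-]] t0 t1.
exists (t *: a + (1 - t) *: a'); first exact: Fc.
exists (t *: b + (1 - t) *: b'); first exact: Fc.
by rewrite !scalerBr opprD !addrA [_ - t *: b]addrAC.
Qed.

Lemma convex_linear_image (W : normedModType R) (f : {linear V -> W}) F :
  convex F -> convex (f @` F).
Proof.
move=> Fc _ _ t [a Fa <-] [b Fb <-] t0 t1.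
by exists (t *: a + (1 - t) *: b); [exact: Fc | rewrite linearD !linearZ].
Qed.

Lemma convex_sum_scale Q m (w : 'I_m -> R) (q : 'I_m -> V) :
  Q 0 -> convex Q -> (forall i, 0 <= w i) -> (forall i, Q (q i)) ->
  exists2 r, Q r & \sum_i w i *: q i = (\sum_i w i) *: r.
Proof.
move=> Q0 Qc; elim: m w q => [|m IH] w q w0 Qq.
  by exists 0 => //; rewrite !big_ord0 scaler0.
have [r Qr Er] := IH (fun i => w (lift ord0 i)) (fun i => q (lift ord0 i))
  (fun i => w0 _) (fun i => Qq _).
rewrite !big_ord_recl /= Er; set W := \sum_(i < m) _.
have W0 : 0 <= W by apply: sumr_ge0 => i _; apply: w0.
have [T0|Tneq0] := eqVneq (W + w ord0) 0.
  have /andP[/eqP -> /eqP ->] : (W == 0) && (w ord0 == 0) by rewrite -paddr_eq0 ?T0.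
  by exists r => //; rewrite !scale0r add0r addr0 scale0r.
have Tgt0 : 0 < W + w ord0 by rewrite lt_def Tneq0 addr_ge0.
exists ((W / (W + w ord0)) *: r + (1 - W / (W + w ord0)) *: q ord0).
  apply: Qc => //; first by rewrite divr_ge0 // ltW.
  by rewrite ler_pdivrMr // mul1r lerDl.
rewrite [w ord0 + W]addrC scalerDr !scalerA mulrBr mulr1 [_ * (W / _)]mulrC.
by rewrite divfK // addrAC subrr add0r addrC.
Qed.

Lemma convex_common_image (W : lmodType R) (N : {linear V -> W}) F
    (f g a b : V) (s : R) :
  convex F -> F f -> F g -> F a -> F b -> 0 <= s -> N (g - f) = s *: N (a - b) ->
  exists l : R, [/\ 0 <= l <= s, F ((1 - l) *: f + l *: a),
    F ((1 - l) *: g + l *: b) & N ((1 - l) *: f + l *: a) = N ((1 - l) *: g + l *: b)].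
Proof.
move=> Fc Ff Fg Fa Fb s0 NgfE; pose l := s / (1 + s).
have s1 : 0 < 1 + s by rewrite ltr_pwDl.
have l0 : 0 <= l by rewrite divr_ge0 // ltW.
have l1 : l <= 1 by rewrite ler_pdivrMr // mul1r lerDr.
have lE : (1 - l) * s = l by rewrite /l; field; rewrite gt_eqF.
have Fcomb x y : F x -> F y -> F ((1 - l) *: x + l *: y).
  by move=> Fx Fy; have := Fc x y (1 - l) Fx Fy; rewrite subKr; apply; lra.
have ls : l <= s by rewrite ler_pdivrMr // mulrDr mulr1 lerDl mulr_ge0.
clearbody l; exists l; split; [by rewrite l0 ls|exact: Fcomb..|].
have Ncomb x y : N ((1 - l) *: x + l *: y) = (1 - l) *: N x + l *: N y.
  by rewrite linearP [N (l *: _)]linearZ.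
have : (1 - l) *: (N g - N f) = l *: (N a - N b) by rewrite -!linearB NgfE scalerA lE.
rewrite !Ncomb !scalerBr => /(congr1 (fun v => v + (1 - l) *: N f + l *: N b)).
by rewrite subrK addrAC subrK => ->; rewrite addrC.
Qed.

End convex_sets.

Section finite_spanning.
Context {K : fieldType} {vT : vectType K}.

Lemma exists_spanning_seq (Q : set vT) :
  exists s : seq vT, (forall x, x \in s -> Q x) /\ forall q, Q q -> q \in span s.
Proof.
apply: contrapT => noSpan.
have free_in_Q k :
    exists s : seq vT, [/\ (forall x, x \in s -> Q x), free s & size s = k].
  elim: k => [|k [s [sQ fs ss]]]; first by exists [::]; split => //; exact: nil_free.
  have /existsNP [q /not_implyP [Qq qs]] : ~ forall q, Q q -> q \in span s.
    by move=> sQspan; apply: noSpan; exists s.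
  exists (q :: s); split; last by rewrite /= ss.
  - by move=> x; rewrite inE => /orP [/eqP ->|/sQ].
  - by rewrite free_cons fs andbT; apply/negP.
have [s [_ /eqP fs ss]] := free_in_Q (\dim {: vT}).+1.
by have := dimvS (subvf (span s)); rewrite fs ss ltnn.
Qed.

End finite_spanning.

Section absolutely_convex_rows.
Variables (R : realType) (n : nat) (Q : set 'rV[R]_n).
Hypotheses (Q0 : Q 0) (QN : forall x, Q x -> Q (- x)) (Qc : convex Q).

(* Coordinates with respect to a spanning family taken from [Q] are linear,
   hence small on small vectors; splitting them by sign writes [x] as a
   nonnegative combination of points of [Q]. *)
Lemma absconvex_small_scaled (t : R) : 0 < t -> exists2 d : R, 0 < d &
  forall x, Q x -> (forall j, `|x 0 j| < d) ->
  exists2 s : R, 0 <= s <= t & exists2 q, Q q & x = s *: q.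
Proof.
move=> t0; have [s [sQ Qspan]] := exists_spanning_seq Q.
pose T := in_tuple s.
pose C := \sum_(i < size s) \sum_(j < n) `|coord T i (delta_mx 0 j)|.
have C0 : 0 <= C by do 2!apply: sumr_ge0 => ? _.
exists (t / (C + 1)); first by rewrite divr_gt0 // ltr_wpDl.
move=> x Qx xsmall; pose c i := coord T i x.
pose q i := if 0 <= c i then T`_i else - T`_i.
have Qq i : Q (q i).
  have QTi : Q T`_i by apply/sQ/mem_nth.
  by rewrite /q; case: ifP => _; [|apply: QN].
have [r Qr Er] := convex_sum_scale Q0 Qc (fun i => normr_ge0 (c i)) Qq.
exists (\sum_i `|c i|); last first.
  have xT : x \in span T by exact: Qspan.
  exists r => //; rewrite -Er {1}(coord_span xT).
  apply: eq_bigr => i _; rewrite /q -/(c i); case: ifP => ci.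
    by rewrite ger0_norm.
  by rewrite ltr0_norm ?scalerN ?scaleNr ?opprK // ltNge ci.
have c_small i : `|c i| <= t / (C + 1) * \sum_(j < n) `|coord T i (delta_mx 0 j)|.
  rewrite /c {1}(row_sum_delta x) linear_sum mulr_sumr.
  apply: le_trans (ler_norm_sum _ _ _) _; apply: ler_sum => j _.
  by rewrite linearZ normrM ler_wpM2r // ltW.
rewrite sumr_ge0 //=; apply: le_trans (ler_sum _ (fun i _ => c_small i)) _.
rewrite -mulr_sumr -/C mulrAC ler_pdivrMr ?ltr_wpDl //.
by apply: ler_wpM2l; [exact: ltW | rewrite lerDl].
Qed.

End absolutely_convex_rows.

Section bounded_linear.
Variables (R : realType) (X : normedModType R).

Definition dual_linear (L : X -> R) (HL : dual_elt L) : {linear X -> R} :=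
  HB.pack_for {linear X -> R} L (GRing.isLinear.Build R X R *:%R L HL.1).

Lemma linear_bounded_diffset (Y : normedModType R) (f : {linear X -> Y})
    (F : set X) : continuous f -> bounded_set F ->
  exists2 M : R, 0 < M & forall z, diffset F z -> `|f z| <= M.
Proof.
move=> fc /pinfty_ex_gt0 [B B0 FB].
have /linear_boundedP /pinfty_ex_gt0 [C C0 fC] := continuous_linear_bounded 0 (fc 0).
exists (C * (B + B)); first by rewrite mulr_gt0 ?addr_gt0.
move=> _ [a Fa [b Fb <-]]; apply: le_trans (fC _) _.
rewrite ler_pM2l //; apply: le_trans (ler_normB _ _) _.
by rewrite lerD ?FB.
Qed.

End bounded_linear.

Section F_topology.
Variables (R : realType) (X : normedModType R) (F : set X).

Lemma mink_lt_ex x (r : R) : (mink F x < r%:E)%E ->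
  exists t z, [/\ 0 < t, t < r, diffset F z & x = t *: z].
Proof.
move=> /ereal_inf_lt [_ [t [t0 [z Dz xE]] <-]].
by rewrite lte_fin => tr; exists t, z.
Qed.

(* A functional bounded by [M] on [F - F] is [M]-Lipschitz for [mink F]. *)
Lemma F_open_sublevel (L : {linear X -> R}) (M c : R) : 0 < M ->
  (forall z, diffset F z -> `|L z| <= M) -> F_open F [set f | F f /\ L f < c].
Proof.
move=> M0 LM; split=> [f []//|u [Fu Luc]].
exists ((c - L u) / M); first by rewrite divr_gt0 // subr_gt0.
move=> f Ff /mink_lt_ex [t [z [t0 tr Dz fuE]]]; split => //.
have : L f - L u <= t * M.
  have -> : L f - L u = t * L z by rewrite -[RHS]/(t *: L z) -linearZ -fuE linearB.
  apply: le_trans (ler_norm _) _.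
  by rewrite normrM gtr0_norm // ler_pM2l // LM.
have : t * M < c - L u by rewrite -ltr_pdivlMr.
lra.
Qed.

Lemma borel_F_floor_level (l : X -> R) (k : int) :
  (forall c, borel_F F [set f | F f /\ l f < c]) ->
  borel_F F [set f | F f /\ Num.floor (l f) = k].
Proof.
move=> lev; have -> : [set f | F f /\ Num.floor (l f) = k] =
    F `\` ([set f | F f /\ l f < k%:~R] `|` (F `\` [set f | F f /\ l f < (k + 1)%:~R])).
  apply/seteqP; split=> [f [Ff <-]|f [Ff /not_orP [nlt_lk nge_lk1]]].
    split=> // -[[_ lt_lk]|[_ nlt_lk1]]; first by move: lt_lk; rewrite ltNge floor_le.
    by apply: nlt_lk1; split=> //; exact: floorD1_gt.
  split=> //; apply/eqP; rewrite floor_eq; apply/andP; split.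
    by rewrite leNgt; apply/negP => lt_lk; apply: nlt_lk.
  by apply: contrapT => nlt_lk1; apply: nge_lk1; split=> // -[].
apply: sigma_algebraCD; apply: sigma_algebra_setU; first exact: lev.
by apply: sigma_algebraCD; exact: lev.
Qed.

Lemma F_measurable_factor (Y : normedModType R) (I : countType) (idx : X -> I)
    (h : I -> Y) :
  (forall z, borel_F F [set f | F f /\ idx f = z]) -> F_measurable F (h \o idx).
Proof.
move=> cellB B _.
have -> : F `&` (h \o idx) @^-1` B =
    \bigcup_z (if h z \in B then [set f | F f /\ idx f = z] else set0).
  apply/seteqP; split=> [f [Ff Bf]|f [z _]].
    by exists (idx f) => //; rewrite mem_set.
  by case: ifPn => // /set_mem Bz [Ff fz]; split; rewrite /preimage /= ?fz.
apply: sigma_algebra_bigcup_countable => z.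
by case: ifP => _; [exact: cellB | exact: sigma_algebra0].
Qed.

End F_topology.

Lemma floor_div_eq_dist (R : realType) (d x y : R) : 0 < d ->
  Num.floor (x / d) = Num.floor (y / d) -> `|x - y| < d.
Proof.
move=> d0 xy; have := floor_itv (x / d); have := floor_itv (y / d).
rewrite xy intrD1 => /andP[ly uy] /andP[lx ux].
have -> : x - y = d * (x / d - y / d) by field; rewrite gt_eqF.
by rewrite normrM gtr0_norm // gtr_pMr // ltr_norml; apply/andP; split; lra.
Qed.

Section grid_algorithm.
Variables (R : realType) (X Y : normedModType R) (S : {linear X -> Y}) (F : set X).
Variables (n : nat) (L : 'I_n -> {linear X -> R}).

Definition meas (f : X) : 'rV[R]_n := \row_i L i f.

Lemma meas_linear : linear meas.
Proof. by move=> a x y; apply/rowP => i; rewrite !mxE linearP. Qed.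

HB.instance Definition _ := GRing.isLinear.Build R X 'rV[R]_n *:%R meas meas_linear.

Definition cell_index (d : R) (f : X) : {ffun 'I_n -> int} :=
  [ffun i => Num.floor (L i f / d)].

Definition cell_rep (d : R) (z : {ffun 'I_n -> int}) : X :=
  xget 0 [set g | F g /\ cell_index d g = z].

Definition grid_alg (A : X -> Y) (d : R) (f : X) : Y := A (cell_rep d (cell_index d f)).

Lemma cell_repP (d : R) f : F f ->
  F (cell_rep d (cell_index d f)) /\
  cell_index d (cell_rep d (cell_index d f)) = cell_index d f.
Proof.
move=> Ff; apply: (@xgetPex _ 0 [set g | F g /\ cell_index d g = cell_index d f]).
by exists f.
Qed.

Lemma grid_alg_det_non (A : X -> Y) (d : R) :
  (forall i, continuous (L i)) -> det_non_alg n (grid_alg A d).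
Proof.
move=> Lc; exists (fun i => L i).
exists (fun y => A (cell_rep d [ffun i => Num.floor (y i / d)])).
by split=> // i; split; [exact: linearP | exact: Lc].
Qed.

Lemma grid_alg_measurable (A : X -> Y) (d : R) : 0 < d ->
  (forall i, exists2 M : R, 0 < M & forall z, diffset F z -> `|L i z| <= M) ->
  F_measurable F (grid_alg A d).
Proof.
move=> d0 Lbd; apply: (F_measurable_factor (fun z => A (cell_rep d z))) => z.
have -> : [set f | F f /\ cell_index d f = z] =
    F `&` \bigcap_i [set f | F f /\ Num.floor (L i f / d) = z i].
  apply/seteqP; split=> [f [Ff <-]|f [Ff cellf]].
    by split=> // i _; rewrite ffunE.
  by split=> //; apply/ffunP => i; rewrite ffunE; have [] := cellf i I.
apply: sigma_algebra_setI_bigcap => i; apply: borel_F_floor_level => c.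
have -> : [set f | F f /\ L i f / d < c] = [set f | F f /\ L i f < c * d].
  by apply/seteqP; split=> f [Ff lt]; split=> //; move: lt; rewrite ltr_pdivrMr.
have [M M0 LM] := Lbd i; apply: sub_sigma_algebra; exact: F_open_sublevel M0 LM.
Qed.

Lemma dist_convex_step (D l : R) (f a : X) :
  (forall z, diffset F z -> `|S z| <= D) -> F f -> F a -> 0 <= l ->
  `|S f - S ((1 - l) *: f + l *: a)| <= l * D.
Proof.
move=> SD Ff Fa l0.
have -> : S f - S ((1 - l) *: f + l *: a) = l *: S (f - a).
  rewrite -linearB -linearZ scalerBl scale1r scalerBr opprD opprB addrA.
  by rewrite subrKC.
by rewrite normrZ ger0_norm // ler_wpM2l // SD //; exists f => //; exists a.
Qed.

(* |S f - A g| <= |S f - S f'| + |S f' - A f'| + |A g' - S g'|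
                 + |S g' - S g| + |S g - A g|, using A f' = A g'. *)
Lemma err_convex_shift (A : X -> Y) (e D l : R) (f g a b : X) :
  (forall h, F h -> `|S h - A h| <= e) -> (forall z, diffset F z -> `|S z| <= D) ->
  F f -> F g -> F a -> F b -> 0 <= l ->
  F ((1 - l) *: f + l *: a) -> F ((1 - l) *: g + l *: b) ->
  A ((1 - l) *: f + l *: a) = A ((1 - l) *: g + l *: b) ->
  `|S f - A g| <= 3 * e + 2 * (l * D).
Proof.
set f' := _ + l *: a; set g' := _ + l *: b => Ae SD Ff Fg Fa Fb l0 Ff' Fg' Afg.
have Sf := dist_convex_step SD Ff Fa l0; have Sg := dist_convex_step SD Fg Fb l0.
have Af' := Ae _ Ff'; have Ag' := Ae _ Fg'; have Ag := Ae _ Fg.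
rewrite -/f' in Sf; rewrite distrC -/g' in Sg.
rewrite distrC in Ag'; rewrite Afg in Af'.
have := ler_distD (S f') (S f) (A g); have := ler_distD (A f') (S f') (A g).
have := ler_distD (S g') (A g') (A g); have := ler_distD (S g) (S g') (A g).
rewrite Afg; lra.
Qed.

Lemma grid_alg_err (A : X -> Y) (e D eps : R) :
  convex F -> F !=set0 -> 0 < D -> 0 < eps ->
  (forall z, diffset F z -> `|S z| <= D) ->
  (forall f g, meas f = meas g -> A f = A g) ->
  (forall f, F f -> `|S f - A f| <= e) ->
  exists2 d : R, 0 < d & forall f, F f -> `|S f - grid_alg A d f| <= 3 * e + eps.
Proof.
move=> Fc [f0 Ff0] D0 eps0 SD Ameas Ae; pose Q := meas @` diffset F.
have Q0 : Q 0 by exists (f0 - f0); [exists f0 => //; exists f0 | rewrite subrr linear0].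
have QN x : Q x -> Q (- x).
  move=> [_ [a Fa [b Fb <-]] <-]; exists (b - a); last by rewrite -linearN opprB.
  by exists b => //; exists a.
have Qc : convex Q := convex_linear_image (convex_diffset Fc).
pose t := eps / (2 * D); have t0 : 0 < t by rewrite divr_gt0 // mulr_gt0.
have [d d0 Qsmall] := absconvex_small_scaled Q0 QN Qc t0.
exists d => // f Ff; have [Fg gf] := cell_repP d Ff.
set g := cell_rep d (cell_index d f) in Fg gf *.
have gf_small j : `|meas (g - f) 0 j| < d.
  rewrite mxE linearB; apply: floor_div_eq_dist => //.
  by have := congr1 (fun z : {ffun 'I_n -> int} => z j) gf; rewrite !ffunE.
have Qgf : Q (meas (g - f)) by exists (g - f) => //; exists g => //; exists f.
have [s /andP[s0 st] [_ [_ [a Fa [b Fb <-]] <-] gfE]] := Qsmall _ Qgf gf_small.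
have [l [/andP[l0 ls] Ff' Fg' Nfg]] := convex_common_image Fc Ff Fg Fa Fb s0 gfE.
apply: le_trans (err_convex_shift Ae SD Ff Fg Fa Fb l0 Ff' Fg' (Ameas _ _ Nfg)) _.
have : l * D <= t * D by rewrite ler_pM2r // (le_trans ls st).
have : t * D = eps / 2 by rewrite /t; field; rewrite gt_eqF.
lra.
Qed.

End grid_algorithm.

Lemma det_non_mb_approx (R : realType) (X Y : normedModType R)
    (S : {linear X -> Y}) (F : set X) (n : nat) (A : X -> Y) (e eps : R) :
  continuous S -> bounded_set F -> convex F -> F !=set0 -> 0 < eps ->
  det_non_alg n A -> (forall f, F f -> `|S f - A f| <= e) ->
  exists2 A', det_non_alg n A' /\ F_measurable F A' &
    forall f, F f -> `|S f - A' f| <= 3 * e + eps.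
Proof.
move=> Sc Fb Fc Fne eps0 [L [phi [Ldual AE]]] Ae.
pose Ll i := dual_linear (Ldual i).
have [D D0 SD] := linear_bounded_diffset Sc Fb.
have Ameas f g : meas Ll f = meas Ll g -> A f = A g.
  move=> fg; rewrite !AE; congr phi; apply/funext => i.
  by have := congr1 (fun v : 'rV_n => v 0 i) fg; rewrite !mxE.
have [d d0 dA] := grid_alg_err Fc Fne D0 eps0 SD Ameas Ae.
exists (grid_alg F Ll A d) => //; split.
  by apply: grid_alg_det_non => i; exact: (Ldual i).2.
apply: grid_alg_measurable => // i.
by apply: linear_bounded_diffset Fb; exact: (Ldual i).2.
Qed.

Section worst_case_error.
Variables (R : realType) (X Y : normedModType R) (S : {linear X -> Y}) (F : set X).
Variables (n : nat).

Lemma err_le (A : X -> Y) (r : R) :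
  (err S F A <= r%:E)%E <-> forall f, F f -> `|S f - A f| <= r.
Proof.
split=> [Ar f Ff|Ar].
  by rewrite -lee_fin; apply: le_trans Ar; apply: ereal_sup_ubound; exists f.
by apply: ge_ereal_sup => _ [f Ff <-]; rewrite lee_fin Ar.
Qed.

Lemma e_det_non_ge0 : F !=set0 -> (0 <= e_det_non n S F)%E.
Proof.
move=> [f0 Ff0]; apply: le_ereal_inf_tmp => _ [A _ <-].
apply: (@le_trans _ _ (`|S f0 - A f0|%:E)); first by rewrite lee_fin.
by apply: ereal_sup_ubound; exists f0.
Qed.

Lemma e_det_non_mb_set0 : e_det_non_mb n S set0 = -oo%E.
Proof.
apply/eqP; rewrite eq_le leNye andbT; pose A0 (f : X) : Y := 0.
have A0det : det_non_alg n A0.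
  exists (fun _ _ => 0), (fun _ => 0); split=> // i; split; last exact: cst_continuous.
  by move=> a x y; rewrite mulr0 addr0.
have A0mb : F_measurable set0 A0 by move=> B _; rewrite set0I; exact: sigma_algebra0.
apply: ge_ereal_inf; exists (err S set0 A0); first by exists A0.
by rewrite /err image_set0 ereal_sup0.
Qed.

Lemma e_det_non_mb_le3 : continuous S -> bounded_set F -> convex F -> F !=set0 ->
  (e_det_non_mb n S F <= 3%:E * e_det_non n S F)%E.
Proof.
move=> Sc Fb Fc Fne; have := e_det_non_ge0 Fne.
case E : e_det_non => [r| |] // r0; last by rewrite mulry gtr0_sg // mul1e leey.
apply/lee_addgt0Pr => eps eps0.
have /ereal_inf_lt [_ [A Adet <-] /ltW /err_le Ae] :
    (e_det_non n S F < (r + eps / 4)%:E)%E by rewrite E lte_fin ltrDl divr_gt0.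
have eps40 : 0 < eps / 4 by rewrite divr_gt0.
have [A' A'mb A'e] := det_non_mb_approx Sc Fb Fc Fne eps40 Adet Ae.
apply: ge_ereal_inf; exists (err S F A'); first by exists A'.
rewrite -EFinM -EFinD; apply/err_le => f Ff; apply: le_trans (A'e f Ff) _; lra.
Qed.

End worst_case_error.

Theorem lemma6p2 (R : realType) (X Y : completeNormedModType R)
  (S : {linear X -> Y}) (HS : continuous S)
  (F : set X) (Fb : bounded_set F) (Fc : convex F) (n : nat) :
  (e_det_non_mb n S F <= 8%:E * e_det_non n S F)%E.
Proof.
have [Fne|F0] := pselect (F !=set0); last first.
  suff -> : F = set0 by rewrite e_det_non_mb_set0 leNye.
  by apply/seteqP; split=> // f Ff; apply: F0; exists f.
apply: le_trans (e_det_non_mb_le3 n HS Fb Fc Fne) _.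
by apply: lee_wpmul2r; [exact: e_det_non_ge0 | rewrite lee_fin ler_nat].
Qed.
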